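(* Let $v\ge 2$ and $1\le s<t\le k$ be integers such that every prime divisor of $v$ is at least $k$. Then there exists an AOA$(s,t,k,v)$.
   Context: An orthogonal array OA$(t,k,v)$ (with $1\le t\le k$) is a $v^t\times k$ array with entries from a set $X$ of size $v$ such that, for every choice of $t$ of its columns, each $t$-tuple in $X^t$ appears exactly once as a row of the corresponding $v^t\times t$ subarray. For integers $1\le s\le t\le k$, an augmented orthogonal array AOA$(s,t,k,v)$ is a $v^t\times(k+1)$ array $A$ such that: (1) the first $k$ columns of $A$ form an OA$(t,k,v)$ on a symbol set $X$ of size $v$; (2) the last column of $A$ has entries from a set $Y$ of size $v^{t-s}$; (3) for any choice of $s$ of the first $k$ columns, these $s$ columns together with the last column contain every $(s+1)$-tuple of $X^s\times Y$ exactly once as a row. *)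

From mathcomp Require Import all_boot.
Set Implicit Arguments. Unset Strict Implicit. Unset Printing Implicit Defensive.

(* An array with v^t rows and k columns over the symbol set X = 'I_v is
   represented as a function  A : 'I_(v^t) -> 'I_k -> 'I_v  (A r c = entry in
   row r, column c).  A choice of t columns is an injective map 'I_t -> 'I_k. *)
Definition is_OA (t k v : nat) (A : 'I_(v ^ t) -> 'I_k -> 'I_v) : Prop :=
  forall f : 'I_t -> 'I_k, injective f ->
  forall x : 'I_t -> 'I_v, exists! r : 'I_(v ^ t), forall i, A r (f i) = x i.

(* Augmented orthogonal array AOA(s,t,k,v): the first k columns are A,
   the last column is L, with entries in Y = 'I_(v^(t-s)). *)
Definition is_AOA (s t k v : nat) (A : 'I_(v ^ t) -> 'I_k -> 'I_v)
    (L : 'I_(v ^ t) -> 'I_(v ^ (t - s))) : Prop :=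
  [/\ 1 <= s, s <= t, t <= k,
      is_OA A &
      forall g : 'I_s -> 'I_k, injective g ->
      forall (x : 'I_s -> 'I_v) (y : 'I_(v ^ (t - s))),
      exists! r : 'I_(v ^ t), (forall i, A r (g i) = x i) /\ L r = y].

From mathcomp Require Import all_boot all_algebra zify.
Set Implicit Arguments. Unset Strict Implicit. Unset Printing Implicit Defensive.
Import GRing.Theory.

(* Index the v^t rows by the polynomials P of degree < t over Z_v.  Column j
   holds P(j), and the last column holds the top t - s coefficients of P.
   Since every prime divisor of v is at least k, the differences of the points
   0, ..., k-1 are units of Z_v, so a polynomial of size n vanishing at n of
   them is zero.  Hence the row map restricted to any t columns, or to any s
   columns together with the last one, is injective, and a counting argument
   makes it bijective. *)

Lemma inj_card_exists_unique (T U : finType) (F : T -> U) :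
  injective F -> #|U| <= #|T| -> forall y, exists! x, F x = y.
Proof.
move=> injF leUT y; have [g gK Kg] := inj_card_bij injF leUT.
by exists (g y); split=> [|x <-]; rewrite ?Kg ?gK.
Qed.

Section SmallPointsInZp.

Variables v k : nat.
Hypothesis v_gt1 : 1 < v.
Hypothesis primes_v_ge : forall p, prime p -> p %| v -> k <= p.

Lemma coprime_lt_primes m : 0 < m < k -> coprime v m.
Proof.
case/andP=> m_gt0 ltmk; rewrite coprime_has_primes ?(ltnW v_gt1) //.
apply/hasPn=> p; rewrite !mem_primes => /and3P[pr_p _ p_dvd_m].
apply/negP=> /and3P[_ _ p_dvd_v].
by have := primes_v_ge pr_p p_dvd_v; have := dvdn_leq m_gt0 p_dvd_m; lia.
Qed.

Lemma Zp_natr_subr_unit a b : a < k -> b < k -> a != b ->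
  (b%:R - a%:R : 'Z_v)%R \is a GRing.unit.
Proof.
wlog ltab : a b / a < b => [hwlog lt_ak lt_bk|lt_ak lt_bk _].
  case: ltngtP => [ltab|ltba|]; rewrite ?eqxx // => _.
    by apply: hwlog; rewrite ?ltn_eqF.
  by rewrite -opprB unitrN; apply: hwlog; rewrite ?ltn_eqF.
rewrite -natrB ?(ltnW ltab) // unitZpE // coprime_lt_primes // subn_gt0 ltab.
exact: leq_ltn_trans (leq_subr _ _) lt_bk.
Qed.

Lemma uniq_roots_natr n (a : 'I_n -> nat) : injective a -> (forall i, a i < k) ->
  forall r : seq 'I_n, uniq r -> uniq_roots [seq (a i)%:R : 'Z_v | i <- r]%R.
Proof.
move=> inj_a lt_ak; elim=> //= i r IHr /andP[i_notin_r uniq_r].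
rewrite IHr // andbT all_map; apply/allP=> j j_in_r /=.
rewrite /diff_roots mulrC eqxx Zp_natr_subr_unit //.
by apply: contraNneq i_notin_r => /inj_a ->.
Qed.

Lemma poly_natr_roots_eq0 n (a : 'I_n -> nat) (p : {poly 'Z_v}) :
  injective a -> (forall i, a i < k) -> size p <= n ->
  (forall i, p.[(a i)%:R] = 0)%R -> p = 0%R.
Proof.
move=> inj_a lt_ak size_p p_a0; apply/eqP; apply: contraTT size_p => p_neq0.
have := max_ring_poly_roots p_neq0 _ (uniq_roots_natr inj_a lt_ak (enum_uniq 'I_n)).
rewrite size_map -cardE card_ord -ltnNge; apply.
by apply/allP=> _ /mapP[i _ ->]; apply/rootP.
Qed.

End SmallPointsInZp.

Section PolynomialAOA.

Variables v s t k : nat.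
Hypothesis v_gt1 : 1 < v.
Hypothesis primes_v_ge : forall p, prime p -> p %| v -> k <= p.
Hypothesis lt_st : s < t.

Lemma card_Zp_ffun n : #|{ffun 'I_n -> 'Z_v}| = v ^ n.
Proof. by rewrite card_ffun !card_ord Zp_cast. Qed.

Definition row_coefs (r : 'I_(v ^ t)) : {ffun 'I_t -> 'Z_v} :=
  enum_val (cast_ord (esym (card_Zp_ffun t)) r).

Definition row_poly r : {poly 'Z_v} := Poly (fgraph (row_coefs r)).

Definition ord_of_Zp (z : 'Z_v) : 'I_v := cast_ord (Zp_cast v_gt1) z.

Definition poly_OA (r : 'I_(v ^ t)) (j : 'I_k) : 'I_v :=
  ord_of_Zp (row_poly r).[(j : nat)%:R]%R.

Definition top_coefs r : {ffun 'I_(t - s) -> 'Z_v} :=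
  [ffun j : 'I_(t - s) => ((row_poly r)`_(s + j)%N)%R].

Definition poly_AOA_label r : 'I_(v ^ (t - s)) :=
  cast_ord (card_Zp_ffun (t - s)) (enum_rank (top_coefs r)).

Lemma coef_row_poly r (l : 'I_t) : ((row_poly r)`_l)%R = row_coefs r l.
Proof. by rewrite coef_Poly nth_fgraph_ord. Qed.

Lemma size_row_poly r : size (row_poly r) <= t.
Proof. by apply: leq_trans (size_Poly _) _; rewrite size_tuple card_ord. Qed.

Lemma row_poly_inj : injective row_poly.
Proof.
move=> r1 r2 eq_poly.
suff /enum_val_inj/cast_ord_inj : row_coefs r1 = row_coefs r2 by [].
by apply/ffunP=> l; rewrite -!coef_row_poly eq_poly.
Qed.

Lemma poly_OA_inj n (g : 'I_n -> 'I_k) r1 r2 : injective g ->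
  size (row_poly r1 - row_poly r2)%R <= n ->
  (forall i, poly_OA r1 (g i) = poly_OA r2 (g i)) -> r1 = r2.
Proof.
move=> inj_g size_diff eq_cols; apply: row_poly_inj; apply/eqP; rewrite -subr_eq0.
apply/eqP/(poly_natr_roots_eq0 v_gt1 primes_v_ge (a := fun i => val (g i))) => //.
- by move=> i j /val_inj/inj_g.
- by move=> i; apply: ltn_ord.
- by move=> i; apply/eqP; rewrite hornerD hornerN subr_eq0 (cast_ord_inj (eq_cols i)).
Qed.

Lemma top_coefs_eq r1 r2 : top_coefs r1 = top_coefs r2 ->
  forall j, s <= j -> ((row_poly r1)`_j = (row_poly r2)`_j)%R.
Proof.
move=> eq_top j le_sj; case: (ltnP j t) => [lt_jt|le_tj].
  have lt_jst : j - s < t - s by rewrite ltn_sub2r.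
  by move/ffunP/(_ (Ordinal lt_jst)): eq_top; rewrite !ffunE /= subnKC.
by rewrite !(leq_sizeP _ _ (size_row_poly _)).
Qed.

Lemma poly_OA_is_OA : is_OA poly_OA.
Proof.
move=> f inj_f x.
pose cols r : {ffun 'I_t -> 'I_v} := [ffun i => poly_OA r (f i)].
have inj_cols : injective cols.
  move=> r1 r2 /ffunP eq_cols; apply: (poly_OA_inj inj_f).
    by rewrite (leq_trans (size_polyD _ _)) // size_polyN geq_max !size_row_poly.
  by move=> i; have := eq_cols i; rewrite !ffunE.
have [|r [cols_r uniq_r]] := inj_card_exists_unique inj_cols _ [ffun i => x i].
  by rewrite card_ffun !card_ord.
exists r; split=> [i|r' cols_r']; first by have /ffunP/(_ i) := cols_r; rewrite !ffunE.
by apply: uniq_r; apply/ffunP=> i; rewrite !ffunE.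
Qed.

Lemma poly_AOA_label_unique (g : 'I_s -> 'I_k) : injective g ->
  forall (x : 'I_s -> 'I_v) (y : 'I_(v ^ (t - s))),
  exists! r : 'I_(v ^ t), (forall i, poly_OA r (g i) = x i) /\ poly_AOA_label r = y.
Proof.
move=> inj_g x y.
pose cols r := ([ffun i => poly_OA r (g i)] : {ffun 'I_s -> 'I_v}, poly_AOA_label r).
have inj_cols : injective cols.
  move=> r1 r2 [/ffunP eq_cols eq_label].
  have eq_top := enum_rank_inj (val_inj eq_label).
  apply: (poly_OA_inj inj_g) => [|i]; last by have := eq_cols i; rewrite !ffunE.
  by apply/leq_sizeP=> j le_sj; rewrite coefB (top_coefs_eq eq_top le_sj) subrr.
have [|r [[cols_r label_r] uniq_r]] :=
  inj_card_exists_unique inj_cols _ ([ffun i => x i], y).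
  by rewrite card_prod card_ffun !card_ord -expnD subnKC // ltnW.
exists r; split=> [|r' [cols_r' label_r']].
  by split=> // i; have /ffunP/(_ i) := cols_r; rewrite !ffunE.
by apply: uniq_r; rewrite /cols label_r'; congr pair; apply/ffunP=> i; rewrite !ffunE.
Qed.

End PolynomialAOA.

Theorem theorem2p2 (v s t k : nat) :
  2 <= v -> 1 <= s -> s < t -> t <= k ->
  (forall p : nat, prime p -> p %| v -> k <= p) ->
  exists (A : 'I_(v ^ t) -> 'I_k -> 'I_v) (L : 'I_(v ^ t) -> 'I_(v ^ (t - s))),
    is_AOA A L.
Proof.
move=> v_gt1 s_gt0 lt_st le_tk primes_v_ge.
exists (poly_OA v_gt1), (poly_AOA_label s v_gt1); split=> //.
- exact: ltnW.
- exact: poly_OA_is_OA primes_v_ge.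
- exact: poly_AOA_label_unique primes_v_ge lt_st.
Qed.
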